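(* Let $q,m,p\ge1$ and let $\mathcal{L}:\mathbb{R}^q\to\mathbb{R}$ be differentiable with $L_{\mathrm{sm}}$-Lipschitz gradient, i.e. $\|\nabla\mathcal{L}(\omega)-\nabla\mathcal{L}(\omega')\|\le L_{\mathrm{sm}}\|\omega-\omega'\|$ for all $\omega,\omega'$, and bounded below by $\mathcal{L}^\ast:=\inf\mathcal{L}>-\infty$. Let $\eta\in(0,1/L_{\mathrm{sm}}]$, $K\ge1$, $\omega^{(0)}\in\mathbb{R}^q$, and $\omega^{(k+1)}=\omega^{(k)}-\eta\nabla\mathcal{L}(\omega^{(k)})$ for $k=0,\dots,K-1$. Let $\Phi:\mathbb{R}^q\to\mathbb{R}^{m\times p}$ satisfy $\|\Phi(\omega)-\Phi(\omega')\|\le G\|\omega-\omega'\|$ for all $\omega,\omega'$. Let $u^\ast\in\mathbb{R}^m$, $\lambda\ge0$, and define \[ E_{\mathrm{proj}}(\omega):=\big\|\big(I_m-\Phi(\omega)(\Phi(\omega)^\top\Phi(\omega)+\lambda I_p)^{-1}\Phi(\omega)^\top\big)u^\ast\big\|_2,\qquad E_k:=E_{\mathrm{proj}}(\omega^{(k)}). \] Assume either $\lambda>0$, or $\lambda=0$ and $\sigma_{\min}(\Phi(\omega^{(k)}))\ge\gamma>0$ for all $0\le k\le K$. Then there is a constant $C_{\mathrm{cond}}\ge1$, depending only on $\lambda$ (resp. $\gamma$), on $\max_{0\le k\le K}\|\Phi(\omega^{(k)})\|$ and on $\|u^\ast\|_2$, such that \[ E_K\le E_0+C_{\mathrm{cond}}\sum_{k=0}^{K-1}\big\|\Phi(\omega^{(k+1)})-\Phi(\omega^{(k)})\big\|\le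 E_0+C_{\mathrm{cond}}\,G\sum_{k=0}^{K-1}\big\|\omega^{(k+1)}-\omega^{(k)}\big\|, \] and moreover \[ E_K\le E_0+C_{\mathrm{cond}}\,G\,\sqrt{K}\Big(\sum_{k=0}^{K-1}\big\|\omega^{(k+1)}-\omega^{(k)}\big\|^2\Big)^{1/2}. \]
   Context: $\|\cdot\|$ is the Euclidean norm on vectors and the spectral norm on matrices; $\sigma_{\min}$ is the smallest of the $p$ singular values. $\omega$ are the parameters of a network up to its penultimate layer and $\Phi(\omega)$ is the design matrix of penultimate-layer features; when $\lambda=0$ (full column rank), $E_{\mathrm{proj}}(\omega)=\min_{\theta}\|\Phi(\omega)\theta-u^\ast\|_2$ is the best least-squares fit of the target $u^\ast$ by a linear last-layer head. *)

From HB Require Import structures.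
From mathcomp Require Import all_boot all_order all_algebra.
From mathcomp Require Import all_classical all_reals all_analysis.
Set Implicit Arguments. Unset Strict Implicit. Unset Printing Implicit Defensive.
Import Order.TTheory GRing.Theory Num.Theory.
Import numFieldNormedType.Exports.
Local Open Scope classical_set_scope.
Local Open Scope ring_scope.

Definition eucl {R : realType} {n : nat} (v : 'cV[R]_n) : R :=
  Num.sqrt (\sum_(i < n) v i ord0 ^+ 2).

Definition dotv {R : realType} {n : nat} (v w : 'cV[R]_n) : R :=
  \sum_(i < n) v i ord0 * w i ord0.

Definition specnorm {R : realType} {m p : nat} (A : 'M[R]_(m, p)) : R :=
  sup [set eucl (A *m x) | x in [set x : 'cV[R]_p | eucl x = 1]].

(* Smallest of the p singular values of A (m x p), via its variational
   characterization: min over unit vectors x of |A x|_2. *)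
Definition sigma_min {R : realType} {m p : nat} (A : 'M[R]_(m, p)) : R :=
  inf [set eucl (A *m x) | x in [set x : 'cV[R]_p | eucl x = 1]].

Definition Eproj {R : realType} {q m p : nat} (Phi : 'cV[R]_q -> 'M[R]_(m, p))
  (lam : R) (ustar : 'cV[R]_m) (w : 'cV[R]_q) : R :=
  eucl ((1%:M - Phi w *m invmx ((Phi w)^T *m Phi w + lam%:M) *m (Phi w)^T)
        *m ustar).

Definition proj_bounds {R : realType} {q m p : nat}
  (Phi : 'cV[R]_q -> 'M[R]_(m, p)) (lam : R) (ustar : 'cV[R]_m)
  (G : R) (K : nat) (w : nat -> 'cV[R]_q) (C : R) : Prop :=
  let E k := Eproj Phi lam ustar (w k) in
  [/\ E K <= E 0%N + C * \sum_(k < K) specnorm (Phi (w k.+1) - Phi (w k)),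
      E 0%N + C * \sum_(k < K) specnorm (Phi (w k.+1) - Phi (w k))
        <= E 0%N + C * G * \sum_(k < K) eucl (w k.+1 - w k)
    & E K <= E 0%N + C * G * Num.sqrt (K%:R)
                * Num.sqrt (\sum_(k < K) eucl (w k.+1 - w k) ^+ 2)].

(* The bounds hold along any sequence [w].
   Write [E_proj = |u - F a(F)|] with the ridge coefficients [a(F) = (F^T F + lam I)^-1 F^T u].
   If the regularized Gram matrices of [F] and [F'] have inverses of norm at most [beta] and
   [|F|, |F'| <= M], then applying [F^T F + lam I] to [a(F') - a(F)] gives
   [(F' - F)^T u - (F' - F)^T F a(F') - F'^T (F' - F) a(F')], and hence the one-step bound
   [|u - F' a(F')| <= |u - F a(F)| + (2 M beta + 2 M^3 beta^2) |F' - F| |u|].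
   Summing it telescopes; the Lipschitz bound on [Phi] and Cauchy-Schwarz give the other two
   inequalities. Coercivity of the Gram matrix yields [beta = 1/lam] when [lam > 0], and
   [beta = 1/gam^2] when [lam = 0] and [sigma_min >= gam]. *)

From HB Require Import structures.
From mathcomp Require Import all_boot all_order all_algebra.
From mathcomp Require Import all_classical all_reals all_analysis.
From mathcomp Require Import ring lra.
Import Order.TTheory GRing.Theory Num.Theory.
Import numFieldNormedType.Exports.
Set Implicit Arguments. Unset Strict Implicit. Unset Printing Implicit Defensive.
Local Open Scope classical_set_scope.
Local Open Scope ring_scope.

Section Euclidean.
Variables (R : realType) (n : nat).
Implicit Types (a : R) (u v w : 'cV[R]_n).

Lemma dotvC v w : dotv v w = dotv w v.
Proof. by apply: eq_bigr => i _; rewrite mulrC. Qed.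

Lemma dotvDr u v w : dotv u (v + w) = dotv u v + dotv u w.
Proof. by rewrite /dotv -big_split; apply: eq_bigr => i _; rewrite !mxE mulrDr. Qed.

Lemma dotvDl u v w : dotv (v + w) u = dotv v u + dotv w u.
Proof. by rewrite dotvC dotvDr !(dotvC u). Qed.

Lemma dotvZr a v w : dotv v (a *: w) = a * dotv v w.
Proof. by rewrite /dotv mulr_sumr; apply: eq_bigr => i _; rewrite !mxE mulrCA. Qed.

Lemma dotvZl a v w : dotv (a *: v) w = a * dotv v w.
Proof. by rewrite dotvC dotvZr dotvC. Qed.

Lemma dotvNr v w : dotv v (- w) = - dotv v w.
Proof. by rewrite -scaleN1r dotvZr mulN1r. Qed.

Lemma dotvNl v w : dotv (- v) w = - dotv v w.
Proof. by rewrite dotvC dotvNr dotvC. Qed.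

Lemma dotvv v : dotv v v = eucl v ^+ 2.
Proof.
rewrite /eucl sqr_sqrtr; last by apply: sumr_ge0 => i _; exact: sqr_ge0.
by apply: eq_bigr => i _; rewrite expr2.
Qed.

Lemma eucl_ge0 v : 0 <= eucl v.
Proof. exact: sqrtr_ge0. Qed.

Lemma eucl0 : eucl (0 : 'cV[R]_n) = 0.
Proof. by rewrite /eucl big1 ?sqrtr0 // => i _; rewrite mxE expr0n. Qed.

Lemma eucl_eq0 v : eucl v = 0 -> v = 0.
Proof.
move=> /eqP; rewrite sqrtr_eq0 => sum_le0; apply/matrixP => i j; rewrite ord1 mxE.
have sum0 : \sum_(k < n) v k ord0 ^+ 2 = 0.
  by apply/eqP; rewrite eq_le sum_le0 sumr_ge0 // => k _; exact: sqr_ge0.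
have /(_ i isT) /eqP := psumr_eq0P (fun k _ => sqr_ge0 (v k ord0)) sum0.
by rewrite sqrf_eq0 => /eqP.
Qed.

Lemma euclZ a v : eucl (a *: v) = `|a| * eucl v.
Proof.
rewrite /eucl -sqrtr_sqr -sqrtrM ?sqr_ge0 // mulr_sumr; congr Num.sqrt.
by apply: eq_bigr => i _; rewrite mxE exprMn.
Qed.

Lemma euclN v : eucl (- v) = eucl v.
Proof. by rewrite -scaleN1r euclZ normrN1 mul1r. Qed.

Lemma eucl_normalize v : eucl v != 0 -> eucl ((eucl v)^-1 *: v) = 1.
Proof. by move=> v_neq0; rewrite euclZ ger0_norm ?invr_ge0 ?eucl_ge0 // mulVf. Qed.

Lemma eucl_const1 : eucl (const_mx 1 : 'cV[R]_n) = Num.sqrt n%:R.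
Proof.
by rewrite /eucl (eq_bigr (fun=> 1)) ?sumr_const ?card_ord // => i _; rewrite mxE expr1n.
Qed.

(* With [s = |w|^2] and [t = <v, w>], expanding [0 <= |s v - t w|^2]
   gives [0 <= s (s |v|^2 - t^2)]. *)
Lemma dotv_sqr_le v w : dotv v w ^+ 2 <= eucl v ^+ 2 * eucl w ^+ 2.
Proof.
have [/eucl_eq0 ->|w_neq0] := eqVneq (eucl w) 0.
  by rewrite eucl0 expr0n mulr0 /dotv big1 ?expr0n // => i _; rewrite mxE mulr0.
rewrite -!dotvv; set t := dotv v w; set s := dotv w w.
have s_gt0 : 0 < s by rewrite /s dotvv exprn_gt0 // lt_def w_neq0 eucl_ge0.
have := sqr_ge0 (eucl (s *: v - t *: w)); rewrite -dotvv.
rewrite !dotvDl !dotvDr !dotvNl !dotvNr !dotvZl !dotvZr (dotvC w v) -/s -/t.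
nra.
Qed.

Lemma normr_dotv_le v w : `|dotv v w| <= eucl v * eucl w.
Proof.
rewrite -ler_sqr ?nnegrE ?mulr_ge0 ?eucl_ge0 // real_normK ?num_real // exprMn.
exact: dotv_sqr_le.
Qed.

Lemma ler_euclD v w : eucl (v + w) <= eucl v + eucl w.
Proof.
rewrite -ler_sqr ?nnegrE ?addr_ge0 ?eucl_ge0 // -dotvv.
rewrite !dotvDl !dotvDr !dotvv (dotvC w v).
have := ler_norm (dotv v w); have := normr_dotv_le v w; nra.
Qed.

End Euclidean.

Lemma dotv_mulmx (R : realType) m n (A : 'M[R]_(m, n)) v w :
  dotv v (A *m w) = dotv (A^T *m v) w.
Proof.
rewrite /dotv; under eq_bigr do rewrite mxE mulr_sumr.
rewrite exchange_big; apply: eq_bigr => j _; rewrite !mxE mulr_suml.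
by apply: eq_bigr => i _; rewrite !mxE mulrCA mulrA.
Qed.

Lemma ler_sum_sqrt_sum_sqr (R : realType) K (e : 'I_K -> R) :
  \sum_k e k <= Num.sqrt K%:R * Num.sqrt (\sum_k e k ^+ 2).
Proof.
have -> : \sum_k e k = dotv (const_mx 1) (\col_k e k).
  by apply: eq_bigr => k _; rewrite !mxE mul1r.
rewrite -eucl_const1.
have -> : Num.sqrt (\sum_k e k ^+ 2) = eucl (\col_k e k).
  by congr Num.sqrt; apply: eq_bigr => k _; rewrite mxE.
exact: le_trans (ler_norm _) (normr_dotv_le _ _).
Qed.

Section OperatorNorms.
Variables (R : realType) (m n : nat).
Implicit Types (B : 'M[R]_(m, n)) (x : 'cV[R]_n).

Let unit_image B := [set eucl (B *m x) | x in [set x : 'cV[R]_n | eucl x = 1]].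

Lemma eucl_mulmx_normalize B x :
  eucl x != 0 -> eucl (B *m x) = eucl x * eucl (B *m ((eucl x)^-1 *: x)).
Proof.
move=> x_neq0; rewrite -scalemxAr euclZ ger0_norm ?invr_ge0 ?eucl_ge0 //.
by rewrite mulrA mulfV // mul1r.
Qed.

(* Bounded by the Frobenius norm, so [specnorm] is a genuine supremum, not a junk value. *)
Lemma has_ubound_unit_image B : has_ubound (unit_image B).
Proof.
exists (Num.sqrt (\sum_i eucl (row i B)^T ^+ 2)) => _ [x /= x1 <-].
rewrite [eucl (B *m x)]/eucl ler_sqrt; last by apply: sumr_ge0 => i _; exact: sqr_ge0.
apply: ler_sum => i _; have := dotv_sqr_le (row i B)^T x.
rewrite x1 expr1n mulr1; congr (_ ^+ 2 <= _).
by rewrite mxE; apply: eq_bigr => j _; rewrite !mxE.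
Qed.

Lemma eucl_mulmx_le_specnorm B x : eucl (B *m x) <= specnorm B * eucl x.
Proof.
have [/eucl_eq0 ->|x_neq0] := eqVneq (eucl x) 0.
  by rewrite mulmx0 !eucl0 mulr0.
rewrite eucl_mulmx_normalize // [_ * eucl x]mulrC ler_pM2l ?lt_def ?x_neq0 ?eucl_ge0 //.
apply: ub_le_sup (has_ubound_unit_image B) _ _.
exact: ex_intro2 _ _ _ (eucl_normalize x_neq0) erefl.
Qed.

Lemma specnorm_ge0 B : 0 <= specnorm B.
Proof.
rewrite /specnorm -/(unit_image B).
have [->|/set0P [_ [x x1 _]]] := eqVneq (unit_image B) set0; first by rewrite sup0.
apply: le_trans (eucl_ge0 (B *m x)) _.
exact: ub_le_sup (has_ubound_unit_image B) _ (ex_intro2 _ _ x x1 erefl).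
Qed.

Lemma sigma_min_le_eucl_mulmx B x (g : R) :
  g <= sigma_min B -> g * eucl x <= eucl (B *m x).
Proof.
move=> g_le; have [->|x_neq0] := eqVneq (eucl x) 0; first by rewrite mulr0 eucl_ge0.
rewrite eucl_mulmx_normalize // mulrC ler_pM2l ?lt_def ?x_neq0 ?eucl_ge0 //.
apply: le_trans g_le _; apply: ge_inf; first by exists 0 => _ [y _ <-]; exact: eucl_ge0.
exact: ex_intro2 _ _ _ (eucl_normalize x_neq0) erefl.
Qed.

Lemma eucl_mulmx_le B x c : specnorm B <= c -> eucl (B *m x) <= c * eucl x.
Proof.
by move=> B_le; apply: (le_trans (eucl_mulmx_le_specnorm B x)); rewrite ler_wpM2r ?eucl_ge0.
Qed.

End OperatorNorms.

Lemma eucl_trmx_mulmx_le (R : realType) m n (B : 'M[R]_(m, n)) y c :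
  specnorm B <= c -> eucl (B^T *m y) <= c * eucl y.
Proof.
move=> B_le; have c_ge0 : 0 <= c := le_trans (specnorm_ge0 B) B_le.
have [->|z_neq0] := eqVneq (eucl (B^T *m y)) 0; first by rewrite mulr_ge0 ?eucl_ge0.
have : eucl (B^T *m y) ^+ 2 <= eucl y * (c * eucl (B^T *m y)).
  rewrite -dotvv -dotv_mulmx.
  apply: (le_trans (le_trans (ler_norm _) (normr_dotv_le _ _))).
  by apply: ler_wpM2l; [exact: eucl_ge0 | exact: eucl_mulmx_le].
have : 0 < eucl (B^T *m y) by rewrite lt_def z_neq0 eucl_ge0.
have := eucl_ge0 y; nra.
Qed.

Definition invmx_bounded (R : realType) n (A : 'M[R]_n) (beta : R) :=
  A \in unitmx /\ forall y, eucl (invmx A *m y) <= beta * eucl y.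

Section Coercive.
Variables (R : realType) (n : nat) (A : 'M[R]_n) (c : R).
Hypotheses (c_gt0 : 0 < c) (coercive : forall x, c * eucl x ^+ 2 <= dotv x (A *m x)).

Lemma coercive_eucl_mulmx_ge x : c * eucl x <= eucl (A *m x).
Proof.
have [->|x_neq0] := eqVneq (eucl x) 0; first by rewrite mulr0 eucl_ge0.
have x_gt0 : 0 < eucl x by rewrite lt_def x_neq0 eucl_ge0.
rewrite -(ler_pM2l x_gt0) mulrCA -expr2.
exact: le_trans (coercive x) (le_trans (ler_norm _) (normr_dotv_le _ _)).
Qed.

Lemma coercive_unitmx : A \in unitmx.
Proof.
rewrite -unitmx_tr -row_free_unit; apply: inj_row_free => v vA0.
apply: trmx_inj; rewrite trmx0; apply: eucl_eq0.
have := coercive_eucl_mulmx_ge v^T; rewrite -[A]trmxK -trmx_mul vA0 trmx0 eucl0.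
by rewrite pmulr_rle0 // => v_le0; apply/eqP; rewrite eq_le v_le0 eucl_ge0.
Qed.

Lemma coercive_invmx_bounded : invmx_bounded A c^-1.
Proof.
split=> [|y]; first exact: coercive_unitmx.
rewrite -(ler_pM2l c_gt0) mulrA mulfV ?gt_eqF // mul1r.
by have := coercive_eucl_mulmx_ge (invmx A *m y); rewrite mulKVmx // coercive_unitmx.
Qed.

End Coercive.

Section RidgeRegression.
Variables (R : realType) (m p : nat) (lam : R) (u : 'cV[R]_m).
Implicit Types (F : 'M[R]_(m, p)) (x : 'cV[R]_p).

Definition gram F : 'M[R]_p := F^T *m F + lam%:M.

Definition ridge_coef F : 'cV[R]_p := invmx (gram F) *m (F^T *m u).

Lemma ridge_residualE F :
  (1%:M - F *m invmx (gram F) *m F^T) *m u = u - F *m ridge_coef F.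
Proof. by rewrite mulmxBl mul1mx !mulmxA. Qed.

Lemma dotv_gram F x : dotv x (gram F *m x) = eucl (F *m x) ^+ 2 + lam * eucl x ^+ 2.
Proof.
by rewrite mulmxDl dotvDr -mulmxA dotv_mulmx trmxK dotvv mul_scalar_mx dotvZr dotvv.
Qed.

Lemma gram_mulmx_ridge_coefB F F' : gram F \in unitmx -> gram F' \in unitmx ->
  gram F *m (ridge_coef F' - ridge_coef F) =
  (F' - F)^T *m u -
  ((F' - F)^T *m (F *m ridge_coef F') + F'^T *m ((F' - F) *m ridge_coef F')).
Proof.
move=> unitA unitA'; set a' := ridge_coef F'.
have A'a' : gram F' *m a' = F'^T *m u by rewrite mulKVmx.
rewrite mulmxBr mulKVmx // [(F' - F)^T]raddfB /= !(mulmxBl, mulmxBr) -A'a' /gram.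
rewrite !mulmxDl -!mulmxA.
move: (F^T *m (F *m a')) (lam%:M *m a') (F^T *m u) (F'^T *m (F' *m a')) (F'^T *m (F *m a')).
move=> X1 X2 X3 X4 X5.
by rewrite [X5 - X1 + _]addrC subrKA opprB [RHS]addrC -[X4 + X2 - X3]addrA subrKA addrA.
Qed.

End RidgeRegression.

Section RidgePerturbation.
Variables (R : realType) (m p : nat) (lam beta M : R) (u : 'cV[R]_m).
Hypothesis beta_ge0 : 0 <= beta.

Lemma ridge_coef_le (F : 'M[R]_(m, p)) :
  invmx_bounded (gram lam F) beta -> specnorm F <= M ->
  eucl (ridge_coef lam u F) <= beta * M * eucl u.
Proof.
move=> [_ invA] F_le; apply: (le_trans (invA _)); rewrite -mulrA ler_wpM2l //.
exact: eucl_trmx_mulmx_le.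
Qed.

Variables (F F' : 'M[R]_(m, p)).
Hypotheses (invA : invmx_bounded (gram lam F) beta)
  (invA' : invmx_bounded (gram lam F') beta)
  (F_le : specnorm F <= M) (F'_le : specnorm F' <= M).

Let a := ridge_coef lam u F.
Let a' := ridge_coef lam u F'.
Let d := specnorm (F' - F).

Lemma ridge_coefB_le : eucl (a' - a) <= beta * (d * eucl u + 2 * M * d * eucl a').
Proof.
have [unitA invA_le] := invA.
rewrite -[a' - a](mulKmx unitA); apply: (le_trans (invA_le _)); apply: ler_wpM2l => //.
rewrite gram_mulmx_ridge_coefB ?invA'.1 //.
have -> : 2 * M * d * eucl a' = d * (M * eucl a') + M * (d * eucl a') by ring.
have M_ge0 : 0 <= M := le_trans (specnorm_ge0 F) F_le.
apply: (le_trans (ler_euclD _ _)); rewrite euclN; apply: lerD.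
- exact: eucl_trmx_mulmx_le (lexx d).
- apply: (le_trans (ler_euclD _ _)); apply: lerD.
  + apply: (le_trans (eucl_trmx_mulmx_le _ (lexx d))).
    by apply: ler_wpM2l; [exact: specnorm_ge0 | exact: eucl_mulmx_le].
  + apply: (le_trans (eucl_trmx_mulmx_le _ F'_le)).
    by apply: ler_wpM2l => //; exact: eucl_mulmx_le (lexx d).
Qed.

Lemma ridge_residual_perturb :
  eucl (u - F' *m a') <=
  eucl (u - F *m a) + (2 * M * beta + 2 * M ^+ 3 * beta ^+ 2) * d * eucl u.
Proof.
have M_ge0 : 0 <= M := le_trans (specnorm_ge0 F) F_le.
have d_ge0 : 0 <= d := specnorm_ge0 _.
have -> : u - F' *m a' = (u - F *m a) - ((F' - F) *m a' + F *m (a' - a)).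
  by rewrite mulmxBl mulmxBr addrA subrK opprB subrKA.
apply: (le_trans (ler_euclD _ _)); rewrite euclN lerD2l.
apply: (le_trans (ler_euclD _ _)).
have Fa'_le : eucl ((F' - F) *m a') <= d * eucl a' := eucl_mulmx_le _ (lexx d).
have FaB_le : eucl (F *m (a' - a)) <= M * eucl (a' - a) := eucl_mulmx_le _ F_le.
have a'_le : eucl a' <= beta * M * eucl u := ridge_coef_le invA' F'_le.
have := ler_wpM2l M_ge0 ridge_coefB_le.
have := ler_wpM2l d_ge0 a'_le.
have := ler_wpM2l (mulr_ge0 (mulr_ge0 (mulr_ge0 M_ge0 M_ge0) beta_ge0) d_ge0) a'_le.
nra.
Qed.

End RidgePerturbation.

(* The absolute values make the constant at least [1] even for negative arguments. *)
Definition Ccond (R : realType) (beta M c : R) : R :=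
  1 + (2 * `|M| * `|beta| + 2 * `|M| ^+ 3 * `|beta| ^+ 2) * `|c|.

Lemma Ccond_ge1 (R : realType) (beta M c : R) : 1 <= Ccond beta M c.
Proof. by rewrite lerDl !mulr_ge0 ?addr_ge0 ?exprn_ge0 ?ler0n. Qed.

Lemma CcondE (R : realType) (beta M c : R) : 0 <= beta -> 0 <= M -> 0 <= c ->
  Ccond beta M c = 1 + (2 * M * beta + 2 * M ^+ 3 * beta ^+ 2) * c.
Proof. by move=> *; rewrite /Ccond !ger0_norm. Qed.

Lemma ler_telescope (R : numDomainType) (E f : nat -> R) K :
  (forall k, (k < K)%N -> E k.+1 <= E k + f k) -> E K <= E 0%N + \sum_(k < K) f k.
Proof.
elim: K => [|K IH] step; first by rewrite big_ord0 addr0.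
rewrite big_ord_recr /= addrA; apply: (le_trans (step K (ltnSn K))).
by rewrite lerD2r IH // => k lt_kK; rewrite step // ltnS ltnW.
Qed.

Lemma lipschitz_const_ge0 (R : realType) q m p (f : 'cV[R]_q -> 'M[R]_(m, p)) G :
  (0 < q)%N -> (forall w1 w2, specnorm (f w1 - f w2) <= G * eucl (w1 - w2)) -> 0 <= G.
Proof.
move=> q_gt0 f_lip; have := f_lip (const_mx 1) 0; rewrite subr0 eucl_const1.
have : 0 < Num.sqrt q%:R :> R by rewrite sqrtr_gt0 ltr0n.
have := specnorm_ge0 (f (const_mx 1) - f 0); nra.
Qed.

Lemma gram_invmx_bounded_ridge (R : realType) m p (F : 'M[R]_(m, p)) lam :
  0 < lam -> invmx_bounded (gram lam F) lam^-1.
Proof.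
by move=> lam_gt0; apply: coercive_invmx_bounded => // x; rewrite dotv_gram lerDr sqr_ge0.
Qed.

Lemma gram_invmx_bounded_sigma_min (R : realType) m p (F : 'M[R]_(m, p)) gam :
  0 < gam -> gam <= sigma_min F -> invmx_bounded (gram 0 F) (gam ^+ 2)^-1.
Proof.
move=> gam_gt0 gam_le; apply: coercive_invmx_bounded; first exact: exprn_gt0.
move=> x; rewrite dotv_gram mul0r addr0 -exprMn.
rewrite ler_sqr ?nnegrE ?mulr_ge0 ?eucl_ge0 ?(ltW gam_gt0) //.
exact: sigma_min_le_eucl_mulmx.
Qed.

Lemma proj_bounds_of_invmx_bounded (R : realType) q m p (Phi : 'cV[R]_q -> 'M[R]_(m, p))
    lam u G K (w : nat -> 'cV[R]_q) beta M :
  (0 < q)%N -> (forall w1 w2, specnorm (Phi w1 - Phi w2) <= G * eucl (w1 - w2)) ->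
  0 <= beta -> (forall k, (k <= K)%N -> specnorm (Phi (w k)) <= M) ->
  (forall k, (k <= K)%N -> invmx_bounded (gram lam (Phi (w k))) beta) ->
  proj_bounds Phi lam u G K w (Ccond beta M (eucl u)).
Proof.
move=> q_gt0 Phi_lip beta_ge0 Phi_le invb.
have M_ge0 : 0 <= M := le_trans (specnorm_ge0 _) (Phi_le 0%N (leq0n K)).
set C := Ccond beta M (eucl u).
have C_ge0 : 0 <= C := le_trans ler01 (Ccond_ge1 _ _ _).
have G_ge0 := lipschitz_const_ge0 q_gt0 Phi_lip.
set E := fun k => Eproj Phi lam u (w k).
set d := fun k => specnorm (Phi (w k.+1) - Phi (w k)).
have E_step k : (k < K)%N -> E k.+1 <= E k + C * d k.
  move=> lt_kK; rewrite /E /Eproj !ridge_residualE.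
  apply: (le_trans (ridge_residual_perturb u beta_ge0 (invb _ (ltnW lt_kK)) (invb _ lt_kK)
    (Phi_le _ (ltnW lt_kK)) (Phi_le _ lt_kK))).
  rewrite lerD2l /C CcondE ?eucl_ge0 //.
  have := specnorm_ge0 (Phi (w k.+1) - Phi (w k)); have := eucl_ge0 u.
  have : 0 <= 2 * M * beta + 2 * M ^+ 3 * beta ^+ 2.
    by rewrite addr_ge0 ?mulr_ge0 ?exprn_ge0.
  rewrite /d; nra.
have E_le : E K <= E 0%N + C * \sum_(k < K) d k.
  by rewrite mulr_sumr; exact: (ler_telescope (f := fun k => C * d k)).
have sum_d_le : \sum_(k < K) d k <= G * \sum_(k < K) eucl (w k.+1 - w k).
  by rewrite mulr_sumr; apply: ler_sum => k _; exact: Phi_lip.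
rewrite /proj_bounds; split.
- exact: E_le.
- by rewrite lerD2l -mulrA ler_wpM2l.
- apply: (le_trans E_le); rewrite lerD2l -!mulrA ler_wpM2l //.
  apply: (le_trans sum_d_le); rewrite ler_wpM2l //.
  exact: ler_sum_sqrt_sum_sqr (fun k : 'I_K => eucl (w k.+1 - w k)).
Qed.

Theorem theorem1 (R : realType) :
  exists Clam Cgam : R -> R -> R -> R,
    (forall a b c, 1 <= Clam a b c) /\ (forall a b c, 1 <= Cgam a b c) /\
  forall (q m p : nat), (0 < q)%N -> (0 < m)%N -> (0 < p)%N ->
  forall (L : 'cV[R]_q -> R) (gradL : 'cV[R]_q -> 'cV[R]_q) (Lsm : R),
    (forall w, differentiable L w) ->
    (forall w h, 'd L w h = dotv (gradL w) h) ->
    0 < Lsm ->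
    (forall w w', eucl (gradL w - gradL w') <= Lsm * eucl (w - w')) ->
    (exists Lb : R, forall w, Lb <= L w) ->
  forall (eta : R) (K : nat) (w : nat -> 'cV[R]_q),
    0 < eta -> eta <= Lsm^-1 -> (1 <= K)%N ->
    (forall k, (k < K)%N -> w k.+1 = w k - eta *: gradL (w k)) ->
  forall (Phi : 'cV[R]_q -> 'M[R]_(m, p)) (G : R),
    (forall w1 w2, specnorm (Phi w1 - Phi w2) <= G * eucl (w1 - w2)) ->
  forall (ustar : 'cV[R]_m) (lam gam : R), 0 <= lam ->
  let M := \big[Num.max/0]_(k < K.+1) specnorm (Phi (w k)) in
  (0 < lam -> proj_bounds Phi lam ustar G K w (Clam lam M (eucl ustar))) /\
  (lam = 0 -> 0 < gam -> (forall k, (k <= K)%N -> gam <= sigma_min (Phi (w k))) ->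
     proj_bounds Phi lam ustar G K w (Cgam gam M (eucl ustar))).
Proof.
exists (fun lam M c => Ccond lam^-1 M c), (fun gam M c => Ccond (gam ^+ 2)^-1 M c).
split; first by move=> *; exact: Ccond_ge1.
split; first by move=> *; exact: Ccond_ge1.
move=> q m p q_gt0 _ _ L gradL Lsm _ _ _ _ _ eta K w _ _ _ _ Phi G Phi_lip u lam gam _ M.
have Phi_le k : (k <= K)%N -> specnorm (Phi (w k)) <= M.
  move=> le_kK; rewrite /M.
  exact: (le_bigmax 0 (fun k : 'I_K.+1 => specnorm (Phi (w k))) (Ordinal (le_kK : (k < K.+1)%N))).
split=> [lam_gt0 | -> gam_gt0 gam_le].
- apply: proj_bounds_of_invmx_bounded => //; first by rewrite invr_ge0 ltW.
  by move=> k _; exact: gram_invmx_bounded_ridge.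
- apply: proj_bounds_of_invmx_bounded => //; first by rewrite invr_ge0 sqr_ge0.
  by move=> k le_kK; exact: gram_invmx_bounded_sigma_min (gam_le k le_kK).
Qed.
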